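(* Let $\mathbb{K}$ be a field, $R=\mathbb{K}[X_1,\ldots,X_n]$, $J\subsetneq I\subset R$ monomial ideals, and $k\in\mathbb{N}$. Let $I'$ and $J'$ be the monomial ideals obtained from $I$ and $J$ as follows: each minimal monomial generator whose degree in $X_n$ is at least $k$ is multiplied by $X_n$, and all other minimal generators are kept unchanged. Then $\operatorname{sdepth} I/J=\operatorname{sdepth} I'/J'$.
   Context: Stanley depth: with the fine multigrading, a Stanley decomposition of a finitely generated multigraded module $M$ is a finite family $(\mathbb{K}[Z_i], m_i)$ with $m_i$ homogeneous, $Z_i$ subsets of the variables, $m_i\mathbb{K}[Z_i]$ free over $\mathbb{K}[Z_i]$, and $M=\bigoplus_i m_i\mathbb{K}[Z_i]$ as multigraded $\mathbb{K}$-vector spaces; its depth is $\min_i|Z_i|$, and $\operatorname{sdepth}M$ is the maximal depth of a Stanley decomposition. *)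

From mathcomp Require Import all_boot.
From mathcomp Require Import boolp.
Set Implicit Arguments. Unset Strict Implicit. Unset Printing Implicit Defensive.

(* Polynomial ring K[X_1,...,X_{n+1}] with the fine Z^{n+1}-grading.
   Variables are indexed by 'I_n.+1; the last variable X_{n+1} is ord_max.
   A monomial X^a is represented by its exponent vector a. *)
Definition mon (n : nat) := {ffun 'I_n.+1 -> nat}.

Definition mdiv n (a b : mon n) : bool := [forall i, a i <= b i].

Definition mulX n (j : 'I_n.+1) (a : mon n) : mon n :=
  [ffun i => a i + (i == j)].

(* A monomial ideal is given by a finite list G of monomial generators
   (every monomial ideal is finitely generated).  X^a lies in it iff some
   generator divides X^a. *)
Definition in_mideal n (G : seq (mon n)) (a : mon n) : bool :=
  has (fun g => mdiv g a) G.

Definition min_gen n (G : seq (mon n)) (a : mon n) : bool :=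
  in_mideal G a && ~~ has (fun g => mdiv g a && (g != a)) G.

Definition shift_gens n (k : nat) (G : seq (mon n)) : seq (mon n) :=
  [seq (if k <= g ord_max then mulX ord_max g else g) | g : mon n <- G & min_gen G g].

(* Monomials of the Stanley space X^a K[Z]: X^c with X^a | X^c and c agreeing
   with a outside Z. *)
Definition in_space n (p : mon n * {set 'I_n.+1}) (c : mon n) : bool :=
  mdiv p.1 c && [forall i, (i \notin p.2) ==> (c i == p.1 i)].

(* Monomials forming a K-basis of I/J (fine graded pieces are
   one-dimensional, spanned by the residue of X^c, c in I \ J). *)
Definition in_quot n (GI GJ : seq (mon n)) (c : mon n) : bool :=
  in_mideal GI c && ~~ in_mideal GJ c.

(* A
   homogeneous element of I/J in the fine grading is a scalar multiple of
   the residue of a monomial X^a; m_i K[Z_i] is free over K[Z_i] iff no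
   X^a * u (u a monomial in Z_i) lies in J, i.e. the whole Stanley space
   consists of basis monomials of I/J (and m_i <> 0); the direct sum
   condition means that the Stanley spaces are pairwise disjoint and cover
   the monomials of I \ J. *)
Definition stanley_dec n (GI GJ : seq (mon n))
    (D : seq (mon n * {set 'I_n.+1})) : Prop :=
  [/\ (forall p, p \in D -> forall c, in_space p c -> in_quot GI GJ c),
      (forall c, in_quot GI GJ c -> exists2 p, p \in D & in_space p c) &
      (forall i j, i < size D -> j < size D -> i != j ->
         forall c, ~~ (in_space (nth ([ffun=> 0%N] : mon n, set0) D i) c
                     && in_space (nth ([ffun=> 0%N] : mon n, set0) D j) c))].

Definition sdec_depth n (D : seq (mon n * {set 'I_n.+1})) : nat :=
  foldr (fun (p : mon n * {set 'I_n.+1}) m => minn #|p.2| m) n.+1 D.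

(* Stanley depth: maximal depth of a Stanley decomposition (depths are at
   most n+1, the number of variables). *)
Definition sdepth n (GI GJ : seq (mon n)) : nat :=
  \max_(d < n.+2 | `[< exists D, stanley_dec GI GJ D /\ d <= sdec_depth D >])
     (d : nat).

From mathcomp Require Import all_boot.
From mathcomp Require Import boolp zify.
Set Implicit Arguments. Unset Strict Implicit. Unset Printing Implicit Defensive.

(* Let t denote the exponent of X_{n+1}.  The minimal generators of I' are
   those of I with t replaced by bump k t (t + 1 when t >= k), so X^c lies in
   I' iff (k > 0 or t > 0) and X^c' lies in I, where c' replaces t by
   unbump k.-1 t (t - 1 when t >= k); the same holds for J'.  Under each of the
   monomial maps c |-> c' and "replace t by bump k t", the preimage of a
   Stanley space m K[Z] is a disjoint union of at most two Stanley spaces with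
   the same variable set Z.  Pulling Stanley decompositions back along these
   maps gives the two inequalities between the Stanley depths. *)

Local Notation space n := (mon n * {set 'I_n.+1})%type.

Lemma count_le1P (T : Type) (P : pred T) (s : seq T) (x0 : T) :
  (forall i j, i < size s -> j < size s -> i != j ->
     ~~ (P (nth x0 s i) && P (nth x0 s j)))
  <-> count P s <= 1.
Proof.
elim: s => [|x s IHs] /=; first by split=> // _ [] [].
have hasP_nth : has P s <-> exists2 j, j < size s & P (nth x0 s j).
  split=> [/(has_nthP x0) [j] | [j]]; first by exists j.
  by move=> *; apply/(has_nthP x0); exists j.
split=> [Hs | Hc].
- have /IHs Hs' : forall i j, i < size s -> j < size s -> i != j ->
     ~~ (P (nth x0 s i) && P (nth x0 s j)) by move=> i j; apply: (Hs i.+1 j.+1).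
  case Px: (P x); last by rewrite add0n.
  suff : ~~ has P s by rewrite has_count; lia.
  apply/negP => /hasP_nth [j lt_j Pj].
  by have := Hs 0 j.+1 isT lt_j isT; rewrite /= Px Pj.
- have Ps_le1 : count P s <= 1 by move: Hc; lia.
  have Px_hasP : P x -> ~~ has P s by rewrite has_count => Px; move: Hc; rewrite Px; lia.
  case=> [|i] [|j] //= lt_i lt_j ne_ij; last first.
  + exact: (proj2 IHs Ps_le1).
  all: apply/negP => /andP [P1 P2].
  + by move/negP: (Px_hasP P2); apply; apply/hasP_nth; exists i.
  + by move/negP: (Px_hasP P1); apply; apply/hasP_nth; exists j.
Qed.

Lemma leq_sdec_depth n d (D : seq (space n)) :
  (d <= sdec_depth D) =
  (d <= n.+1) && all (fun p : space n => d <= #|p.2|) D.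
Proof. by elim: D => [|p D IHD] /=; rewrite ?andbT // leq_min IHD andbCA. Qed.

Lemma stanley_disjointP n (GI GJ : seq (mon n)) D :
  stanley_dec GI GJ D <->
  [/\ (forall p, p \in D -> forall c, in_space p c -> in_quot GI GJ c),
      (forall c, in_quot GI GJ c -> exists2 p, p \in D & in_space p c) &
      (forall c : mon n, count (fun q => in_space q c) D <= 1)].
Proof.
split=> [[H1 H2 H3] | [H1 H2 H3]]; split=> //.
  by move=> c; apply/(count_le1P _ _ ([ffun=> 0%N], set0)) => i j *; apply: H3.
move=> i j + + + c; move: i j; exact/(count_le1P (fun q => in_space q c)).
Qed.

Section Pullback.

Variables (n : nat) (A1 A2 B1 B2 : seq (mon n)).
Variables (f : mon n -> mon n) (V : pred (mon n)).
Variable L : space n -> seq (space n).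

Hypothesis in_quot_pullback :
  forall c, in_quot A1 A2 c = V c && in_quot B1 B2 (f c).
Hypothesis count_pullback :
  forall p c, count (fun q => in_space q c) (L p) = V c && in_space p (f c).
Hypothesis pullback_vars : forall p q, q \in L p -> q.2 = p.2.

Lemma stanley_dec_pullback D :
  stanley_dec B1 B2 D -> stanley_dec A1 A2 (flatten (map L D)).
Proof.
move=> /stanley_disjointP [H1 H2 H3]; apply/stanley_disjointP.
have count_flatten c :
      count (fun q => in_space q c) (flatten (map L D))
      = V c * count (fun q => in_space q (f c)) D.
  elim: D {H1 H2 H3} => [|p D IHD] /=; first by rewrite muln0.
  by rewrite count_cat count_pullback IHD mulnDr mulnb.
split=> [q /flatten_mapP [p pD qL] c qc | c | c].
- have : 0 < count (fun q => in_space q c) (L p).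
    by rewrite -has_count; apply/hasP; exists q.
  by rewrite count_pullback lt0b in_quot_pullback => /andP [-> /(H1 _ pD)].
- rewrite in_quot_pullback => /andP [Vc /H2 [p pD pfc]].
  have /hasP [q qL qc] : has (fun q => in_space q c) (L p).
    by rewrite has_count count_pullback Vc pfc.
  by exists q => //; apply/flatten_mapP; exists p.
- by rewrite count_flatten; case: (V c); rewrite ?mul1n.
Qed.

Lemma sdec_depth_pullback D : sdec_depth D <= sdec_depth (flatten (map L D)).
Proof.
have := leqnn (sdec_depth D); rewrite !leq_sdec_depth => /andP [-> /allP HD] /=.
by apply/allP => q /flatten_mapP [p pD qL]; rewrite (pullback_vars qL) HD.
Qed.

Lemma sdepth_pullback : sdepth B1 B2 <= sdepth A1 A2.
Proof.
apply/bigmax_leqP => d /asboolP [D [decD le_d]].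
apply: (leq_bigmax_cond d); apply/asboolP; exists (flatten (map L D)).
by split; [apply: stanley_dec_pullback | apply: leq_trans (sdec_depth_pullback D)].
Qed.

End Pullback.

(* b is in the one-variable Stanley space X^a K[X] if z, and b = a otherwise. *)
Definition in_space1 (z : bool) (a b : nat) : bool := (a <= b) && (z || (b == a)).

Lemma bump_leq k a b :
  (bump k a <= b) = ((0 < k) || (0 < b)) && (a <= unbump k.-1 b).
Proof. by rewrite /bump /unbump; case: (leqP k a); case: (ltnP k.-1 b) => /=; lia. Qed.

Lemma bump_predK k : cancel (bump k) (unbump k.-1).
Proof.
by move=> t; rewrite /bump /unbump; case: (leqP k t); case: (ltnP k.-1 _); lia.
Qed.

Lemma bump_gt0 k t : (0 < k) || (0 < bump k t).
Proof. by rewrite /bump; case: (leqP k t); lia. Qed.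

Ltac nat_cases_lia := repeat match goal with
 | |- context [?a <= ?b] => case: (leqP a b) => ?
 | |- context [?a == ?b] => case: eqP => ?
 end => //=; lia.

Lemma in_space1_unbump k z a b :
  ((0 < k) || (0 < b)) && in_space1 z a (unbump k.-1 b) =
  in_space1 z (bump k a) b + ([&& ~~ z, 0 < k & a == k.-1] && in_space1 z k b) :> nat.
Proof. by rewrite /in_space1 /bump /unbump; case: z; nat_cases_lia. Qed.

Lemma in_space1_bump k z a b :
  in_space1 z a (bump k b) = (z || (a != k)) && in_space1 z (unbump k a) b.
Proof. by rewrite /in_space1 /bump /unbump; case: z; nat_cases_lia. Qed.

Lemma mdiv_refl n (a : mon n) : mdiv a a.
Proof. exact/forallP. Qed.

Lemma mdiv_trans n (a b c : mon n) : mdiv a b -> mdiv b c -> mdiv a c.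
Proof.
by move=> /forallP ab /forallP bc; apply/forallP => i; apply: leq_trans (ab i) (bc i).
Qed.

Definition mdeg n (a : mon n) : nat := \sum_i a i.

Lemma mdeg_lt n (a b : mon n) : mdiv a b -> a != b -> mdeg a < mdeg b.
Proof.
move=> /forallP ab; case: (pickP (fun i => a i != b i)) => [i ne_i _ | eq_ab].
  rewrite /mdeg (bigD1 i) //= [ltnRHS](bigD1 i) //= -addSn.
  by apply: leq_add; [rewrite ltn_neqAle ne_i ab | apply: leq_sum => j _; apply: ab].
by case/eqP; apply/ffunP => i; apply/eqP/negbFE/eq_ab.
Qed.

Lemma in_mideal_min_gens n (G : seq (mon n)) c :
  in_mideal [seq g <- G | min_gen G g] c = in_mideal G c.
Proof.
apply/idP/idP => [/hasP [g] | Gc].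
  by rewrite mem_filter => /andP [_ gG] gc; apply/hasP; exists g.
pose P d := has (fun g => mdiv g c && (mdeg g == d)) G.
have exP : exists d, P d.
  case/hasP: Gc => g gG gc; exists (mdeg g).
  by apply/hasP; exists g => //; rewrite gc eqxx.
case: (ex_minnP exP) => d /hasP [g gG /andP [gc /eqP deg_g]] min_d.
apply/hasP; exists g => //; rewrite mem_filter gG andbT /min_gen.
rewrite /in_mideal (introT hasP) /=; last by exists g => //; apply: mdiv_refl.
apply/hasP => -[h hG /andP [hg ne_hg]].
have : d <= mdeg h.
  by apply: min_d; apply/hasP; exists h => //; rewrite (mdiv_trans hg gc) eqxx.
by rewrite -deg_g leqNgt mdeg_lt.
Qed.

Definition map_last n (f : nat -> nat) (c : mon n) : mon n :=
  [ffun i => if i == ord_max then f (c i) else c i].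

Lemma map_last_max n f (c : mon n) : map_last f c ord_max = f (c ord_max).
Proof. by rewrite ffunE eqxx. Qed.

Lemma map_last_can n f g : cancel g f -> cancel (@map_last n g) (map_last f).
Proof.
by move=> gK c; apply/ffunP => i; rewrite !ffunE; case: eqP => [->|]; rewrite ?eqxx ?gK.
Qed.

Lemma shift_gen_bump n k (g : mon n) :
  (if k <= g ord_max then mulX ord_max g else g) = map_last (bump k) g.
Proof.
apply/ffunP => i; rewrite [RHS]ffunE /bump.
case: ifP => le_k; rewrite ?ffunE; case: eqP => [->|_] //=.
all: by rewrite ?le_k ?addn0 // addnC.
Qed.

Lemma mdiv_bump_last n k (g c : mon n) :
  mdiv (map_last (bump k) g) c =
  ((0 < k) || (0 < c ord_max)) && mdiv g (map_last (unbump k.-1) c).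
Proof.
apply/forallP/andP => [gc | [pos_c /forallP gc] i].
  split; first by have := gc ord_max; rewrite map_last_max bump_leq => /andP [].
  apply/forallP => i; have := gc i; rewrite !ffunE.
  by case: eqP => // ->; rewrite bump_leq => /andP [].
by have := gc i; rewrite !ffunE; case: eqP => // ->; rewrite bump_leq pos_c.
Qed.

Lemma in_mideal_shift n k (G : seq (mon n)) c :
  in_mideal (shift_gens k G) c =
  ((0 < k) || (0 < c ord_max)) && in_mideal G (map_last (unbump k.-1) c).
Proof.
rewrite /shift_gens -[in_mideal G _]in_mideal_min_gens /in_mideal has_map.
under eq_has => g do rewrite /preim /= shift_gen_bump mdiv_bump_last.
by case: (_ || _); [apply: eq_has | rewrite has_pred0].
Qed.

Lemma in_quot_shift n k (GI GJ : seq (mon n)) c :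
  in_quot (shift_gens k GI) (shift_gens k GJ) c =
  ((0 < k) || (0 < c ord_max)) && in_quot GI GJ (map_last (unbump k.-1) c).
Proof. by rewrite /in_quot !in_mideal_shift; case: (_ || _). Qed.

Definition in_space_front n (p : space n) (c : mon n) : bool :=
  [forall i, (i != ord_max) ==> (p.1 i <= c i) && ((i \in p.2) || (c i == p.1 i))].

Lemma in_spaceE n (p : space n) c :
  in_space p c = in_space_front p c &&
    in_space1 (ord_max \in p.2) (p.1 ord_max) (c ord_max).
Proof.
rewrite /in_space /in_space_front /in_space1 /mdiv.
apply/andP/andP => [[/forallP div /forallP eq] | [/forallP front /andP [le_max eq_max]]].
  split; last by rewrite div -implyNb eq.
  by apply/forallP => i; rewrite div -implyNb eq implybT.
split; apply/forallP => i; case: (eqVneq i ord_max) => [-> | ne_i] //.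
- by move: (front i); rewrite ne_i => /andP [].
- by rewrite implyNb.
- by move: (front i); rewrite ne_i implyNb => /andP [].
Qed.

Lemma in_space_front_map_lastl n f (m : mon n) Z c :
  in_space_front (map_last f m, Z) c = in_space_front (m, Z) c.
Proof. by apply: eq_forallb => i; rewrite ffunE; case: eqP. Qed.

Lemma in_space_front_map_lastr n f (p : space n) c :
  in_space_front p (map_last f c) = in_space_front p c.
Proof. by apply: eq_forallb => i; rewrite ffunE; case: eqP. Qed.

Definition unbump_preimage n k (p : space n) : seq (space n) :=
  (map_last (bump k) p.1, p.2) ::
  nseq [&& ord_max \notin p.2, 0 < k & p.1 ord_max == k.-1]
       (map_last (fun=> k) p.1, p.2).

Definition bump_preimage n k (p : space n) : seq (space n) :=
  nseq ((ord_max \in p.2) || (p.1 ord_max != k)) (map_last (unbump k) p.1, p.2).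

Lemma count_unbump_preimage n k (p : space n) c :
  count (fun q => in_space q c) (unbump_preimage k p) =
  ((0 < k) || (0 < c ord_max)) && in_space p (map_last (unbump k.-1) c).
Proof.
case: p => m Z; rewrite /= count_nseq !in_spaceE.
rewrite !in_space_front_map_lastl in_space_front_map_lastr !map_last_max /=.
case: (in_space_front _ c); last by rewrite andbF.
by rewrite in_space1_unbump mulnC mulnb.
Qed.

Lemma count_bump_preimage n k (p : space n) c :
  count (fun q => in_space q c) (bump_preimage k p) =
  in_space p (map_last (bump k) c).
Proof.
case: p => m Z; rewrite /= count_nseq !in_spaceE.
rewrite in_space_front_map_lastl in_space_front_map_lastr !map_last_max /=.
by rewrite in_space1_bump andbCA mulnb andbC.
Qed.

Lemma sdepth_le_shift n k (GI GJ : seq (mon n)) :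
  sdepth GI GJ <= sdepth (shift_gens k GI) (shift_gens k GJ).
Proof.
apply: (sdepth_pullback (in_quot_shift k GI GJ) (@count_unbump_preimage n k)).
by move=> [m Z] q; rewrite inE => /orP [/eqP -> | /nseqP [-> _]].
Qed.

Lemma sdepth_shift_le n k (GI GJ : seq (mon n)) :
  sdepth (shift_gens k GI) (shift_gens k GJ) <= sdepth GI GJ.
Proof.
have quot_bump c : in_quot GI GJ c =
    predT c && in_quot (shift_gens k GI) (shift_gens k GJ) (map_last (bump k) c).
  by rewrite in_quot_shift map_last_max bump_gt0 map_last_can //; apply: bump_predK.
apply: (sdepth_pullback quot_bump (@count_bump_preimage n k)).
by move=> p q /nseqP [-> _].
Qed.

Theorem proposition5p1 (n : nat) (GI GJ : seq (mon n)) (k : nat) :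
  (forall c, in_mideal GJ c -> in_mideal GI c) ->
  (exists c, in_mideal GI c && ~~ in_mideal GJ c) ->
  sdepth GI GJ = sdepth (shift_gens k GI) (shift_gens k GJ).
Proof. by move=> _ _; apply/eqP; rewrite eqn_leq sdepth_le_shift sdepth_shift_le. Qed.
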